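(* Let $G$ be a finite abelian group of rank $n$ which is not elementary abelian. Then $\tau(G)=n+1$.
   Context: The rank is the minimal number of generators; an elementary abelian group is one isomorphic to $(\mathbb{Z}/p\mathbb{Z})^m$ for a prime $p$. A projective representation of $G$ is an $\alpha$-representation for some cocycle $\alpha$: a map $\rho:G\to\mathrm{GL}_m(\mathbb{C})$ with $\rho(1)=I$ and $\rho(g)\rho(h)=\alpha(g,h)\rho(gh)$; it is faithful if the only $g$ with $\rho(g)$ scalar is $g=1$. $\tau(G)$ is the least degree of a faithful projective representation of $G$. *)

From HB Require Import structures.
From mathcomp Require Import all_boot all_order all_algebra all_fingroup all_solvable.
From mathcomp Require Import complex Rstruct.
Set Implicit Arguments. Unset Strict Implicit. Unset Printing Implicit Defensive.
Import GRing.Theory.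
Local Open Scope ring_scope.

Definition CC : closedFieldType := complex Rdefinitions.R.

Definition alpha_rep (gT : finGroupType) (G : {group gT}) (m : nat)
    (alpha : gT -> gT -> CC) (rho : gT -> 'M[CC]_m) : Prop :=
  [/\ rho 1%g = 1%:M,
      (forall g, g \in G -> rho g \in unitmx),
      (forall g h, g \in G -> h \in G -> alpha g h != 0) &
      (forall g h, g \in G -> h \in G -> rho g *m rho h = alpha g h *: rho (g * h)%g)].

Definition proj_rep (gT : finGroupType) (G : {group gT}) (m : nat)
    (rho : gT -> 'M[CC]_m) : Prop :=
  exists alpha : gT -> gT -> CC, alpha_rep G alpha rho.

Definition faithful_proj_rep (gT : finGroupType) (G : {group gT}) (m : nat)
    (rho : gT -> 'M[CC]_m) : Prop :=
  proj_rep G rho /\ (forall g, g \in G -> is_scalar_mx (rho g) -> g = 1%g).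

Definition has_faithful_proj_rep (gT : finGroupType) (G : {group gT}) (m : nat) : Prop :=
  exists rho : gT -> 'M[CC]_m, faithful_proj_rep G rho.

Definition is_tau (gT : finGroupType) (G : {group gT}) (t : nat) : Prop :=
  has_faithful_proj_rep G t /\ (forall m, has_faithful_proj_rep G m -> (t <= m)%N).

Definition elementary_abelian (gT : finGroupType) (G : {group gT}) : Prop :=
  exists p, prime p /\ (p.-abelem G)%g.

(* A faithful projective representation of degree m of an abelian group G is,
   when irreducible, spanned by the images of G: the commutation factors
   c(g,h) with rho g rho h = c(g,h) rho h rho g form a nondegenerate
   bicharacter (by Schur's lemma), whose orthogonality relations make the
   rho g linearly independent, so |G| <= m^2 and hence r(G) <= m, with equality
   only for elementary abelian G.  When rho is reducible, the elements acting
   by scalars on the quotient by a minimal invariant subspace V form a cyclic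
   subgroup N (they also act by scalars on V, and the ratio of the two scalars
   is a faithful character of N), and G/N acquires a faithful projective
   representation of smaller degree; as r(G) <= r(G/N) + 1, induction on m gives
   r(G) < m, the exceptional case being excluded because V is not a line when
   rho(G) is not commutative.  Conversely, writing G as a direct product of n
   cyclic groups, g |-> diag(1, chi_1(g), ..., chi_n(g)) with faithful
   characters chi_i of the factors has degree n + 1 and is faithful. *)

From mathcomp Require Import all_boot all_algebra all_fingroup all_solvable.
From mathcomp Require Import separable cyclotomic mxrepresentation complex Rstruct ring zify.
From Stdlib Require Import Classical.
Set Implicit Arguments. Unset Strict Implicit. Unset Printing Implicit Defensive.
Import GRing.Theory Num.Theory.
Local Open Scope ring_scope.

Lemma natrCC_eq0 n : (n%:R == 0 :> CC) = (n == 0)%N.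
Proof. by rewrite /CC pnatr_eq0. Qed.

Lemma scalev_inj (F : fieldType) (V : lmodType F) (v : V) :
  v != 0 -> injective (fun a : F => a *: v).
Proof.
move=> v0 a b /eqP; rewrite -subr_eq0 -scalerBl scaler_eq0 (negPf v0) orbF.
by rewrite subr_eq0 => /eqP.
Qed.

Lemma unitmx_neq0 (F : fieldType) n (A : 'M[F]_n) : (0 < n)%N -> A \in unitmx -> A != 0.
Proof. by case: n A => // n A _; apply: contraTneq => ->; rewrite unitmxE det0 unitr0. Qed.

Lemma scalar_mx_inj (F : fieldType) n : (0 < n)%N -> injective (@scalar_mx F n).
Proof.
by move=> n0 a b /matrixP/(_ (Ordinal n0) (Ordinal n0)); rewrite !mxE eqxx !mulr1n.
Qed.

Lemma unitmx_scalar_neq0 (F : fieldType) n (a : F) :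
  (0 < n)%N -> (a%:M : 'M_n) \in unitmx -> a != 0.
Proof. by move=> n0 /(unitmx_neq0 n0); apply: contraNneq => ->; rewrite raddf0. Qed.

Lemma exprS_scalar_add_sqr0 (R : comNzRingType) n (a : R) (M : 'M[R]_n) k :
  M *m M = 0 -> (a%:M + M) ^+ k.+1 = (a ^+ k.+1)%:M + (k.+1%:R * a ^+ k) *: M.
Proof.
move=> MM; elim: k => [|k IH]; first by rewrite !expr1 expr0 mul1r scale1r.
rewrite exprS IH -mulmxE mulmxDl !mulmxDr -scalar_mxM -scalemxAr.
rewrite -scalemxAr MM scaler0 addr0 scalar_mxC !mul_scalar_mx scalerA -exprS.
rewrite -addrA -scalerDl; congr (_ + _ *: _).
by rewrite [a ^+ k.+1]exprS -[k.+2]addn1 natrD; ring.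
Qed.

(* The power is [a^(k+1) + (k+1) a^k M], and [(k+1) a^k != 0] in characteristic 0. *)
Lemma sqr0_eq0_of_scalar_exp n (a : CC) (M : 'M[CC]_n) k :
  a != 0 -> M *m M = 0 -> is_scalar_mx ((a%:M + M) ^+ k.+1) -> M = 0.
Proof.
case: n M => [|n] M a0 MM; first by rewrite [M]flatmx0.
case/is_scalar_mxP=> b; rewrite exprS_scalar_add_sqr0 // => eb.
have K0 : k.+1%:R * a ^+ k != 0 by rewrite mulf_neq0 ?natrCC_eq0 ?expf_neq0.
have eM : M = ((b - a ^+ k.+1) / (k.+1%:R * a ^+ k))%:M.
  apply: (scalerI K0); rewrite scale_scalar_mx [_ * (_ / _)]mulrC divfK //.
  by rewrite raddfB /= -eb addrC addKr.
have /eqP : ((b - a ^+ k.+1) / (k.+1%:R * a ^+ k)) ^+ 2 = 0.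
  by apply: (scalar_mx_inj (ltn0Sn n)); rewrite raddf0 expr2 scalar_mxM -eM.
by rewrite expf_eq0 /= => /eqP g0; rewrite eM g0 raddf0.
Qed.

(** * Projective representations *)

Section ProjectiveRep.
Variables (gT : finGroupType) (G : {group gT}) (m : nat).
Implicit Types (rho : gT -> 'M[CC]_m) (U : 'M[CC]_m).

(* [proj_rep] with the multipliers chosen pointwise, so that no cocycle has to be
   constructed for the derived representations below. *)
Definition projective rho :=
  [/\ rho 1%g = 1%:M, {in G, forall g, rho g \in unitmx} &
      {in G &, forall g h, exists2 a : CC, a != 0 & rho g *m rho h = a *: rho (g * h)%g}].

Definition proj_faithful rho := {in G, forall g, is_scalar_mx (rho g) -> g = 1%g}.

Definition proj_mxmodule rho U := {in G, forall g, stablemx U (rho g)}.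

Definition proj_irreducible rho :=
  forall U, proj_mxmodule rho U -> U != 0 -> row_full U.

Definition commuting rho := {in G &, forall g h, rho g *m rho h = rho h *m rho g}.

Lemma proj_rep_projective rho : proj_rep G rho -> projective rho.
Proof.
case=> alpha [rho1 rhoU alpha0 rhoM]; split=> // g h Gg Gh.
by exists (alpha g h); [apply: alpha0 | apply: rhoM].
Qed.

Variable rho : gT -> 'M[CC]_m.
Hypotheses (rhoP : projective rho) (m_gt0 : (0 < m)%N).

Lemma projective1 : rho 1%g = 1%:M.
Proof. by case: rhoP. Qed.

Lemma projective_unit g : g \in G -> rho g \in unitmx.
Proof. by case: rhoP => _ rhoU _; apply: rhoU. Qed.

Lemma projective_neq0 g : g \in G -> rho g != 0.
Proof. by move=> Gg; rewrite unitmx_neq0 ?projective_unit. Qed.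

Lemma projectiveM g h : g \in G -> h \in G ->
  exists2 a : CC, a != 0 & rho g *m rho h = a *: rho (g * h)%g.
Proof. by case: rhoP => _ _ rhoM; apply: rhoM. Qed.

Lemma projectiveX x k : x \in G -> exists2 b : CC, b != 0 & rho x ^+ k = b *: rho (x ^+ k)%g.
Proof.
move=> Gx; elim: k => [|k [b b0 IH]].
  by exists 1; rewrite ?oner_eq0 // expr0 expg0 scale1r projective1.
have [a a0 e] := projectiveM Gx (groupX k Gx).
exists (a * b); first by rewrite mulf_neq0.
by rewrite exprS IH -mulmxE -scalemxAr e scalerA mulrC expgS.
Qed.

Lemma projective_scalar_exp_order x : x \in G -> is_scalar_mx (rho x ^+ #[x]%g).
Proof.
move=> Gx; have [b _ ->] := projectiveX #[x]%g Gx.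
by rewrite expg_order projective1 scalemx1 scalar_mx_is_scalar.
Qed.

End ProjectiveRep.

Section CommutationFactor.
Variables (gT : finGroupType) (G : {group gT}) (m : nat) (rho : gT -> 'M[CC]_m).
Hypotheses (rhoP : projective G rho) (m_gt0 : (0 < m)%N) (cGG : abelian G).

Lemma comm_factor_exists : exists c : gT -> gT -> CC,
  {in G &, forall g h, rho g *m rho h = c g h *: (rho h *m rho g)}.
Proof.
pose P g h (a : CC) := g \in G -> h \in G -> rho g *m rho h = a *: (rho h *m rho g).
suff /fin_all_exists[c Pc] : forall g, exists cg : gT -> CC, forall h, P g h (cg h).
  by exists c => g h; apply: Pc.
move=> g; apply: fin_all_exists => h.
rewrite /P; case: (boolP (g \in G)) => Gg; last by exists 0.
case: (boolP (h \in G)) => Gh; last by exists 0.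
have [a a0 ->] := projectiveM rhoP Gg Gh; have [b b0 ->] := projectiveM rhoP Gh Gg.
by exists (a / b) => _ _; rewrite scalerA divfK // (centsP cGG).
Qed.

Variable c : gT -> gT -> CC.
Hypothesis rho_comm : {in G &, forall g h, rho g *m rho h = c g h *: (rho h *m rho g)}.

Lemma comm_factorC g h : g \in G -> h \in G -> c g h * c h g = 1.
Proof.
move=> Gg Gh; apply: (@scalev_inj _ _ (rho g *m rho h)).
  by rewrite unitmx_neq0 // unitmx_mul !(projective_unit rhoP).
by rewrite -scalerA -rho_comm // -rho_comm // scale1r.
Qed.

Lemma comm_factor_neq0 g h : g \in G -> h \in G -> c g h != 0.
Proof.
move=> Gg Gh; apply/eqP => c0; have /eqP := comm_factorC Gg Gh.
by rewrite c0 mul0r eq_sym oner_eq0.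
Qed.

Lemma comm_factorMl g1 g2 h : g1 \in G -> g2 \in G -> h \in G ->
  c (g1 * g2)%g h = c g1 h * c g2 h.
Proof.
move=> G1 G2 Gh; have [a a0 ea] := projectiveM rhoP G1 G2.
have G12 := groupM G1 G2.
have e1 : a *: (rho (g1 * g2)%g *m rho h) =
          (c g1 h * c g2 h) *: (a *: (rho h *m rho (g1 * g2)%g)).
  rewrite scalemxAl -ea -mulmxA (rho_comm G2 Gh) -scalemxAr mulmxA (rho_comm G1 Gh).
  by rewrite -!scalemxAl -mulmxA ea -scalemxAr !scalerA [c g2 h * _]mulrC.
have rho_h12 : rho h *m rho (g1 * g2)%g != 0.
  by rewrite unitmx_neq0 // unitmx_mul !(projective_unit rhoP).
apply/(mulfI a0)/(scalev_inj rho_h12).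
by rewrite /= -scalerA -(rho_comm G12 Gh) e1 !scalerA [_ * a]mulrC.
Qed.

End CommutationFactor.

(** * The irreducible case *)

Lemma exists_eigenvalue (F : closedFieldType) n (A : 'M[F]_n) :
  (0 < n)%N -> exists a, eigenvalue A a.
Proof.
move=> n_gt0; have /closed_rootP[a ra] : size (char_poly A) != 1%N.
  by rewrite size_char_poly; case: n A n_gt0.
by exists a; rewrite eigenvalue_root_char.
Qed.

Lemma sum_nontrivial_char_eq0 (gT : finGroupType) (G : {group gT}) (F : fieldType)
    (phi : gT -> F) h0 :
  {in G &, {morph phi : x y / (x * y)%g >-> x * y}} -> h0 \in G -> phi h0 != 1 ->
  \sum_(h in G) phi h = 0.
Proof.
move=> phiM Gh0 phi_h0; set S := \sum_(h in G) phi h.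
have : S * phi h0 = S.
  rewrite /S mulr_suml [RHS](reindex_acts 'R _ Gh0) ?astabsR //=.
  by apply: eq_bigr => h Gh; rewrite phiM.
by move/eqP; rewrite -subr_eq0 -{2}(mulr1 S) -mulrBr mulf_eq0 subr_eq0 (negPf phi_h0) orbF => /eqP.
Qed.

Section Irreducible.
Variables (gT : finGroupType) (G : {group gT}) (m : nat) (rho : gT -> 'M[CC]_m).
Hypotheses (rhoP : projective G rho) (m_gt0 : (0 < m)%N).
Hypotheses (rho_faithful : proj_faithful G rho) (rho_irr : proj_irreducible G rho).

Lemma proj_irr_central_trivial x : x \in G ->
  {in G, forall g, rho x *m rho g = rho g *m rho x} -> x = 1%g.
Proof.
move=> Gx cx; have [a ea] := exists_eigenvalue (rho x) m_gt0.
set U := eigenspace (rho x) a.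
have eU : U *m rho x = a *: U by apply/eigenspaceP.
have U_mod : proj_mxmodule G rho U.
  by move=> g Gg; apply/eigenspaceP; rewrite -mulmxA -cx // mulmxA eU -scalemxAl.
apply: rho_faithful Gx _.
have /eigenspaceP : (1%:M <= U)%MS by apply/submx_full/rho_irr.
by rewrite mul1mx => ->; rewrite scalemx1 scalar_mx_is_scalar.
Qed.

Variable c : gT -> gT -> CC.
Hypothesis rho_comm : {in G &, forall g h, rho g *m rho h = c g h *: (rho h *m rho g)}.

Let c_neq0 := comm_factor_neq0 rhoP m_gt0 rho_comm.
Let cC := comm_factorC rhoP m_gt0 rho_comm.
Let cMl := comm_factorMl rhoP m_gt0 rho_comm.

Lemma comm_factor_separates g g' : g \in G -> g' \in G -> g != g' ->
  exists2 h, h \in G & c h g != c h g'.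
Proof.
move=> Gg Gg' neq_gg'; apply/exists_inP; apply: contraR neq_gg' => /exists_inPn c_eq.
set x := (g' * g^-1)%g; have Gx : x \in G by rewrite groupM ?groupV.
have cx1 h : h \in G -> c x h = 1.
  move=> Gh; have := cMl Gx Gg Gh; rewrite /x -mulgA mulVg mulg1.
  have -> : c g' h = c g h.
    apply: (mulfI (c_neq0 Gh Gg)); rewrite cC //.
    by move/negPn/eqP: (c_eq h Gh) => ->; rewrite cC.
  by move=> e; apply: (mulIf (c_neq0 Gg Gh)); rewrite mul1r -e.
suff x1 : x = 1%g by rewrite eq_sym eq_mulgV1 -/x x1.
by apply: proj_irr_central_trivial => // h Gh; rewrite rho_comm // cx1 // scale1r.
Qed.

Lemma comm_factor_orthogonal g g' : g \in G -> g' \in G ->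
  \sum_(h in G) c h g / c h g' = (g == g')%:R * #|G|%:R.
Proof.
move=> Gg Gg'; have [<-|neq_gg'] := eqVneq g g'.
  rewrite mul1r (eq_bigr (fun _ => 1)) ?sumr_const // => h Gh.
  by rewrite divff ?c_neq0.
have [h0 Gh0 c_h0] := comm_factor_separates Gg Gg' neq_gg'; rewrite mul0r.
apply: (sum_nontrivial_char_eq0 (h0 := h0)) => //.
  by move=> x y Gx Gy /=; rewrite !cMl // invfM; ring.
by apply: contra c_h0 => /eqP/(canRL (divfK (c_neq0 Gh0 Gg'))) ->; rewrite mul1r.
Qed.

Lemma proj_irr_free (I : finType) (gi : I -> gT) (k : I -> CC) :
  injective gi -> (forall i, gi i \in G) ->
  \sum_i k i *: rho (gi i) = 0 -> forall i, k i = 0.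
Proof.
move=> gi_inj Ggi S0.
(* Conjugation by [rho h] twists the coefficients by the character [c h]; the
   orthogonality of these characters then isolates each coefficient. *)
have twist h : h \in G -> \sum_i (k i * c h (gi i)) *: rho (gi i) = 0.
  move=> Gh; apply: (can_inj (mulmxK (projective_unit rhoP Gh))); rewrite /= mul0mx.
  transitivity (rho h *m \sum_i k i *: rho (gi i)); last by rewrite S0 mulmx0.
  rewrite mulmx_suml mulmx_sumr; apply: eq_bigr => i _.
  by rewrite -scalemxAl -scalemxAr (rho_comm Gh (Ggi i)) scalerA.
move=> j; have coef i : \sum_(h in G) (c h (gi j))^-1 * (k i * c h (gi i)) =
    k i * ((gi i == gi j)%:R * #|G|%:R).
  by rewrite -comm_factor_orthogonal // mulr_sumr; apply: eq_bigr => h _; ring.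
have : \sum_(h in G) (c h (gi j))^-1 *: \sum_i (k i * c h (gi i)) *: rho (gi i) = 0.
  by rewrite big1 // => h Gh; rewrite twist ?scaler0.
under eq_bigr do rewrite scaler_sumr; rewrite exchange_big /=.
under eq_bigr => i _ do under eq_bigr => h _ do rewrite scalerA.
under eq_bigr do rewrite -scaler_suml coef.
rewrite (bigD1 j) //= big1 ?addr0 => [|i neq_ij]; last first.
  by rewrite (inj_eq gi_inj) (negPf neq_ij) mul0r mulr0 scale0r.
move/eqP; rewrite eqxx mul1r scaler_eq0 (negPf (projective_neq0 rhoP m_gt0 (Ggi j))).
by rewrite orbF mulf_eq0 natrCC_eq0 eqn0Ngt cardG_gt0 orbF => /eqP.
Qed.

Lemma card_le_sqr_degree : (#|G| <= m * m)%N.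
Proof.
pose gi (i : 'I_#|G|) := enum_val i.
pose M := \matrix_(i < #|G|) mxvec (rho (gi i)).
suff /eqP <- : row_free M by rewrite rank_leq_col.
apply/inj_row_free => v vM0; apply/rowP => j; rewrite mxE.
apply: (@proj_irr_free _ gi (v 0)); [exact: enum_val_inj | exact: enum_valP |].
apply/eqP; rewrite -mxvec_eq0 -{}vM0 mulmx_sum_row linear_sum; apply/eqP/eq_bigr => i _.
by rewrite linearZ /= rowK.
Qed.

End Irreducible.

Lemma sqrn_lt_exp2S m : (m * m < 2 ^ m.+1)%N.
Proof.
elim: m => // m IH; have := ltn_expl m (ltnSn 1).
by rewrite !expnS in IH *; nia.
Qed.

Lemma exists_abelem_of_rank (gT : finGroupType) (G : {group gT}) :
  exists p, exists2 E : {group gT}, prime p &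
    [/\ E \subset G, (p.-abelem E)%g & #|E| = (p ^ 'r(G)%g)%N].
Proof.
have [p p_pr ->] := rank_witness G; have [E /pnElemP[sEG abelE <-]] := p_rank_witness p G.
by exists p, E; rewrite -?card_pgroup ?(abelem_pgroup abelE).
Qed.

Lemma leq_exp2_prime p e : prime p -> (2 ^ e <= p ^ e)%N.
Proof. by move=> p_pr; elim: e => // e IH; rewrite !expnS leq_mul ?prime_gt1. Qed.

Lemma rank_le_of_card_le_sqr (gT : finGroupType) (G : {group gT}) m :
  (#|G| <= m * m)%N -> ('r(G)%g <= m)%N.
Proof.
move=> le_G_m2; have [p [E p_pr [sEG _ cardE]]] := exists_abelem_of_rank G.
have : (2 ^ 'r(G)%g <= m * m)%N.
  apply: (leq_trans _ le_G_m2); apply: (leq_trans _ (subset_leq_card sEG)).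
  by rewrite cardE leq_exp2_prime.
by move/leq_ltn_trans/(_ (sqrn_lt_exp2S m)); rewrite ltn_exp2l.
Qed.

Lemma abelem_of_card_le_sqr_rank (gT : finGroupType) (G : {group gT}) m :
  (#|G| <= m * m)%N -> 'r(G)%g = m -> elementary_abelian G.
Proof.
move=> le_G_m2 rG; have [p [E p_pr [sEG abelE cardE]]] := exists_abelem_of_rank G.
exists p; split=> //; suff <- : E :=: G by [].
apply/eqP; rewrite eqEcard sEG /= cardE rG.
have /dvdnP[k cardG] : (p ^ m %| #|G|)%N by rewrite -rG -cardE cardSg.
rewrite cardG -{2}[(p ^ m)%N]mul1n leq_pmul2r ?expn_gt0 ?prime_gt0 // leqNgt.
apply/negP => k_gt1; have := leq_mul k_gt1 (leq_exp2_prime m p_pr).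
by rewrite -cardG -expnS => /leq_trans/(_ le_G_m2); rewrite leqNgt sqrn_lt_exp2S.
Qed.

(* The induction hypothesis on the degree: in the exceptional case the image of
   [rho] is not commutative, which is what rules it out for quotients. *)
Definition rank_lt_or_exceptional (gT : finGroupType) (G : {group gT}) m
    (rho : gT -> 'M[CC]_m) : Prop :=
  ('r(G)%g < m)%N \/ [/\ elementary_abelian G, ('r(G)%g <= m)%N & ~ commuting G rho].

Lemma proj_irr_rank_bound (gT : finGroupType) (G : {group gT}) m (rho : gT -> 'M[CC]_m) :
  projective G rho -> (0 < m)%N -> abelian G -> proj_faithful G rho ->
  proj_irreducible G rho -> rank_lt_or_exceptional G rho.
Proof.
move=> rhoP m_gt0 cGG rho_faithful rho_irr.
have [c rho_comm] := comm_factor_exists rhoP cGG.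
have le_G_m2 := card_le_sqr_degree rhoP m_gt0 rho_faithful rho_irr rho_comm.
have [rG|neq_rG] := eqVneq 'r(G)%g m; last first.
  by left; rewrite ltn_neqAle neq_rG rank_le_of_card_le_sqr.
right; split; rewrite ?rG //; first exact: abelem_of_card_le_sqr_rank rG.
move=> commG; have := m_gt0; rewrite -rG rank_gt0 => /trivgPn[x Gx /eqP[]].
by apply: (proj_irr_central_trivial m_gt0 rho_faithful rho_irr Gx) => g Gg; apply: commG.
Qed.

(** * The reducible case *)

Section FactorModule.
Variables (F : fieldType) (m : nat) (V : 'M[F]_m).
Local Notation e := (\rank (cokermx V)).

(* The action of [A] on the quotient space [F^m / V], meaningful when [V] is [A]-stable. *)
Definition factmx (A : 'M[F]_m) : 'M[F]_e := in_factmod V (val_factmod (1%:M : 'M_e) *m A).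

Lemma in_factmodM k (W : 'M_(k, m)) A :
  stablemx V A -> in_factmod V (W *m A) = in_factmod V W *m factmx A.
Proof.
move=> sVA; rewrite -{1}[W](add_sub_fact_mod V) mulmxDl linearD /=.
apply: (canLR (subrK _)); apply: etrans (_ : 0 = _).
  apply/eqP; rewrite in_factmod_eq0 (submx_trans _ sVA) //.
  by rewrite submxMr ?val_submodP.
by rewrite /factmx /in_factmod /val_factmod /= !mulmxA mulmx1 subrr.
Qed.

Lemma factmxM A B : stablemx V B -> factmx (A *m B) = factmx A *m factmx B.
Proof. by move=> sVB; rewrite {1}/factmx mulmxA in_factmodM. Qed.

Lemma factmx1 : factmx 1%:M = 1%:M.
Proof. by rewrite /factmx mulmx1 val_factmodK. Qed.

Lemma factmxZ a A : factmx (a *: A) = a *: factmx A.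
Proof. by rewrite /factmx -scalemxAr linearZ. Qed.

Lemma factmxB A B : factmx (A - B) = factmx A - factmx B.
Proof. by rewrite /factmx mulmxBr linearB. Qed.

Lemma factmx_scalar a : factmx a%:M = a%:M.
Proof. by rewrite -scalemx1 factmxZ factmx1 scalemx1. Qed.

Lemma factmx_eq0_sub A : stablemx V A -> factmx A = 0 -> (A <= V)%MS.
Proof.
move=> sVA fA0; rewrite -[A]mul1mx -(add_sub_fact_mod V 1%:M) mulmxDl addmx_sub //.
  by rewrite (submx_trans _ sVA) // submxMr ?val_submodP.
rewrite val_factmodE -mulmxA (submx_trans (submxMl _ _)) // -in_factmod_eq0.
by apply/eqP.
Qed.

End FactorModule.

Lemma rank_quotient_cyclic (gT : finGroupType) (G N : {group gT}) :
  G \subset 'N(N)%g -> cyclic N -> ('r(G)%g <= 'r(G / N)%g + 1)%N.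
Proof.
move=> nNG cycN; have [p _ ->] := rank_witness G.
have rN : ('r_p(N)%g <= 1)%N.
  by rewrite (leq_trans (p_rank_le_rank p N)) // -abelian_rank1_cyclic ?cyclic_abelian.
have rGN : ('r_p(G)%g - 'r_p(N)%g <= 'r_p(G / N)%g)%N := p_rank_quotient p nNG.
have rpGN : ('r_p(G / N)%g <= 'r(G / N)%g)%N := p_rank_le_rank p _.
lia.
Qed.

Section ProjKernel.
Variables (gT : finGroupType) (G : {group gT}) (n : nat) (sigma : gT -> 'M[CC]_n).
Hypotheses (sigmaP : projective G sigma) (n_gt0 : (0 < n)%N) (cGG : abelian G).

Definition proj_ker := [set x in G | is_scalar_mx (sigma x)].

Lemma proj_ker_group_set : group_set proj_ker.
Proof.
apply/group_setP; split=> [|x y].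
  by rewrite inE group1 (projective1 sigmaP) scalar_mx_is_scalar.
rewrite !inE => /andP[Gx /is_scalar_mxP[a ea]] /andP[Gy /is_scalar_mxP[b eb]].
rewrite groupM //=; have [c c0 ec] := projectiveM sigmaP Gx Gy.
apply/is_scalar_mxP; exists (a * b / c); apply: (scalerI c0).
by rewrite -ec ea eb -scalar_mxM scale_scalar_mx [c * _]mulrC divfK.
Qed.

Definition proj_kerG := Group proj_ker_group_set.
Local Notation K := proj_kerG.

Lemma proj_ker_sub : K \subset G.
Proof. by apply/subsetP => x; rewrite inE => /andP[]. Qed.

Lemma proj_ker_norm : G \subset 'N(K)%g.
Proof. exact: sub_abelian_norm cGG proj_ker_sub. Qed.

Definition proj_quo_rep (X : coset_of K) := sigma (repr X).

Lemma mem_repr_quotient X : X \in (G / K)%g -> repr X \in G.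
Proof.
case/morphimP => x Nx Gx ->; have := mem_repr_coset (coset K x).
by rewrite val_coset // => /rcosetP[k Kk ->]; rewrite groupM // (subsetP proj_ker_sub).
Qed.

Lemma proj_quo_rep_projective : projective (G / K)%g proj_quo_rep.
Proof.
split=> [|X QX|X Y QX QY]; first by rewrite /proj_quo_rep repr_coset1 (projective1 sigmaP).
  exact/(projective_unit sigmaP)/mem_repr_quotient.
set x := repr X; set y := repr Y.
have Gx : x \in G := mem_repr_quotient QX; have Gy : y \in G := mem_repr_quotient QY.
have eXY : (X * Y)%g = coset K (x * y).
  by rewrite morphM ?(subsetP proj_ker_norm) //= /x /y !coset_reprK.
have : repr (X * Y)%g \in (K :* (x * y))%g.
  by rewrite -val_coset ?(subsetP proj_ker_norm) ?groupM // -eXY; apply: mem_repr_coset.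
rewrite /proj_quo_rep -/x -/y; case/rcosetP=> k Kk ->.
move: (Kk); rewrite inE => /andP[Gk /is_scalar_mxP[d ed]].
have [a a0 ea] := projectiveM sigmaP Gx Gy.
have [b b0 eb] := projectiveM sigmaP Gk (groupM Gx Gy).
have d0 : d != 0 by rewrite (unitmx_scalar_neq0 n_gt0) // -ed (projective_unit sigmaP).
exists (a * b / d); first by rewrite !mulf_neq0 ?invr_eq0.
rewrite ea; apply: (scalerI d0).
by rewrite [RHS]scalerA (mulrC d) divfK // -scalerA -eb ed mul_scalar_mx !scalerA mulrC.
Qed.

Lemma proj_quo_rep_faithful : proj_faithful (G / K)%g proj_quo_rep.
Proof.
move=> X QX sX; have KX : repr X \in K by rewrite inE mem_repr_quotient.
by rewrite -(coset_reprK X) coset_id.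
Qed.

Lemma proj_quo_rep_commuting : commuting G sigma -> commuting (G / K)%g proj_quo_rep.
Proof. by move=> commG X Y QX QY; rewrite commG ?mem_repr_quotient. Qed.

End ProjKernel.

Section Reducible.
Variables (gT : finGroupType) (G : {group gT}) (m : nat) (rho : gT -> 'M[CC]_m).
Hypotheses (rhoP : projective G rho) (cGG : abelian G) (rho_faithful : proj_faithful G rho).
Variable V : 'M[CC]_m.
Hypotheses (V_mod : proj_mxmodule G rho V) (V_neq0 : V != 0) (V_lt : (\rank V < m)%N).
Hypothesis V_min :
  forall U, proj_mxmodule G rho U -> U != 0 -> (U <= V)%MS -> (V <= U)%MS.

Local Notation e := (\rank (cokermx V)).
Let m_gt0 : (0 < m)%N := leq_ltn_trans (leq0n _) V_lt.

Lemma rank_V_gt0 : (0 < \rank V)%N.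
Proof. by rewrite lt0n mxrank_eq0. Qed.

Lemma quot_degree_gt0 : (0 < e)%N.
Proof. by rewrite mxrank_coker subn_gt0. Qed.

Lemma quot_degree_lt : (e < m)%N.
Proof. by rewrite mxrank_coker ltn_subrL rank_V_gt0 m_gt0. Qed.

Definition quot_rep g := factmx V (rho g).

Lemma quot_rep_projective : projective G quot_rep.
Proof.
split=> [|g Gg|g h Gg Gh]; first by rewrite /quot_rep (projective1 rhoP) factmx1.
  have [a a0 ea] := projectiveM rhoP Gg (groupVr Gg).
  suff /mulmx1_unit[] : quot_rep g *m (a^-1 *: quot_rep g^-1) = 1%:M by [].
  rewrite -scalemxAr /quot_rep -factmxM ?V_mod ?groupV // ea mulgV (projective1 rhoP).
  by rewrite factmxZ factmx1 scalerA mulVf ?scale1r.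
have [a a0 ea] := projectiveM rhoP Gg Gh.
by exists a => //; rewrite /quot_rep -factmxM ?V_mod // ea factmxZ.
Qed.

Lemma quot_scalar_commuting x : x \in G -> is_scalar_mx (quot_rep x) ->
  {in G, forall g, rho x *m rho g = rho g *m rho x}.
Proof.
move=> Gx /is_scalar_mxP[d ed] g Gg; have [c rho_comm] := comm_factor_exists rhoP cGG.
have d0 : d != 0.
  by rewrite (unitmx_scalar_neq0 quot_degree_gt0) // -ed (projective_unit quot_rep_projective).
have : quot_rep x *m quot_rep g = c x g *: (quot_rep g *m quot_rep x).
  by rewrite /quot_rep -!factmxM ?V_mod // rho_comm // factmxZ.
rewrite ed mul_scalar_mx mul_mx_scalar scalerA.
move/(scalev_inj (projective_neq0 quot_rep_projective quot_degree_gt0 Gg)).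
by rewrite -{1}[d]mul1r => /(mulIf d0) c1; rewrite rho_comm // -c1 scale1r.
Qed.

Lemma minimal_central_eigen x : x \in G ->
  {in G, forall g, rho x *m rho g = rho g *m rho x} -> exists lam, V *m rho x = lam *: V.
Proof.
move=> Gx cx.
have [lam /eigenvalueP[u eu u0]] := exists_eigenvalue (restrictmx V (rho x)) rank_V_gt0.
set U := (V :&: eigenspace (rho x) lam)%MS.
have U_mod : proj_mxmodule G rho U.
  move=> g Gg; rewrite sub_capmx (submx_trans _ (V_mod Gg)) ?submxMr ?capmxSl //=.
  apply/eigenspaceP; rewrite -mulmxA -cx // mulmxA.
  by rewrite (eigenspaceP (capmxSr _ _)) -scalemxAl.
have uU : (u *m row_base V <= U)%MS.
  rewrite sub_capmx (submx_trans (submxMl _ _)) ?eq_row_base //=.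
  rewrite -sub_eigenspace_conjmx ?stablemx_row_base ?V_mod ?row_base_free //.
  exact/eigenspaceP.
have U_neq0 : U != 0.
  apply: contraNneq u0 => U0; move: uU.
  by rewrite U0 submx0 mulmx_free_eq0 ?row_base_free.
exists lam; apply/eigenspaceP.
exact: submx_trans (V_min U_mod U_neq0 (capmxSl _ _)) (capmxSr _ _).
Qed.

Local Notation N := (proj_kerG quot_rep_projective).

(* On [N], [rho x] acts by a scalar [lam x] on [V] and by [mu x] on the quotient;
   [lam / mu] is a faithful character of [N], so [N] is cyclic. *)
Section ScalarRatio.
Variables lam mu : gT -> CC.
Hypothesis lam_mu : {in N, forall x, V *m rho x = lam x *: V /\ quot_rep x = (mu x)%:M}.
Let NG := subsetP (proj_ker_sub quot_rep_projective).

Lemma quot_mu_neq0 x : x \in N -> mu x != 0.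
Proof.
move=> Nx; rewrite (unitmx_scalar_neq0 quot_degree_gt0) // -(lam_mu Nx).2.
by rewrite (projective_unit quot_rep_projective) ?NG.
Qed.

Lemma quot_lam_neq0 x : x \in N -> lam x != 0.
Proof.
move=> Nx; apply: contraNneq V_neq0 => lam0; have := (lam_mu Nx).1.
rewrite lam0 scale0r => /(canRL (mulmxK (projective_unit rhoP (NG Nx)))).
by rewrite mul0mx => ->.
Qed.

Lemma quot_lam_mu_mul x y : x \in N -> y \in N -> exists2 a : CC, a != 0 &
  lam x * lam y = a * lam (x * y)%g /\ mu x * mu y = a * mu (x * y)%g.
Proof.
move=> Nx Ny; have [a a0 ea] := projectiveM rhoP (NG Nx) (NG Ny).
have [[lx mx] [ly my]] := (lam_mu Nx, lam_mu Ny).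
have [lxy mxy] := lam_mu (groupM Nx Ny).
exists a => //; split.
  apply: (scalev_inj V_neq0); transitivity (V *m (rho x *m rho y)).
    by rewrite mulmxA lx -scalemxAl ly scalerA.
  by rewrite ea -scalemxAr lxy scalerA.
apply: (scalar_mx_inj quot_degree_gt0); rewrite [LHS]scalar_mxM -mx -my -scale_scalar_mx -mxy.
by rewrite /quot_rep -factmxM ?V_mod ?NG // ea factmxZ.
Qed.

Lemma quot_ratio_morph : {in N &, {morph (fun x => lam x / mu x) : x y / (x * y)%g >-> x * y}}.
Proof.
move=> x y Nx Ny /=; have [a a0 [el em]] := quot_lam_mu_mul Nx Ny.
have [mx0 my0] := (quot_mu_neq0 Nx, quot_mu_neq0 Ny).
have -> : lam (x * y)%g = lam x * lam y / a by rewrite el [a * _]mulrC mulfK.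
have -> : mu (x * y)%g = mu x * mu y / a by rewrite em [a * _]mulrC mulfK.
by field; rewrite a0 mx0 my0.
Qed.

Lemma quot_ratio_eq1 x : x \in N -> lam x / mu x = 1 <-> x = 1%g.
Proof.
move=> Nx; have Gx := NG Nx; split=> [ratio1|->]; last first.
  have [l1 m1] := lam_mu (group1 N).
  rewrite (projective1 rhoP) mulmx1 in l1; rewrite /quot_rep (projective1 rhoP) factmx1 in m1.
  have -> : lam 1%g = 1 by apply: (scalev_inj V_neq0); rewrite /= -l1 scale1r.
  have -> : mu 1%g = 1 by apply: (scalar_mx_inj quot_degree_gt0); rewrite -m1.
  by rewrite divr1.
have [lx mx] := lam_mu Nx; have mu_l : mu x = lam x by apply/esym/divr1_eq.
pose M := rho x - (lam x)%:M.
have VM0 : V *m M = 0 by rewrite mulmxBr lx mul_mx_scalar subrr.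
have MV : (M <= V)%MS.
  apply: factmx_eq0_sub; first by rewrite VM0 sub0mx.
  by rewrite factmxB factmx_scalar -/(quot_rep x) mx mu_l subrr.
have MM0 : M *m M = 0 by case/submxP: MV => D eM; rewrite {1}eM -mulmxA VM0 mulmx0.
have rho_x : rho x = (lam x)%:M + M by rewrite addrC subrK.
have M0 : M = 0.
  apply: (sqr0_eq0_of_scalar_exp (k := #[x]%g.-1) (quot_lam_neq0 Nx) MM0).
  by rewrite -rho_x prednK ?order_gt0 // (projective_scalar_exp_order rhoP).
by apply: rho_faithful Gx _; rewrite rho_x M0 addr0 scalar_mx_is_scalar.
Qed.

End ScalarRatio.

Lemma quot_ker_cyclic : cyclic N.
Proof.
have lm_ex x : exists lm : CC * CC,
    x \in N -> V *m rho x = lm.1 *: V /\ quot_rep x = lm.2%:M.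
  have [Nx | _] := boolP (x \in N); last by exists (0, 0).
  move: (Nx); rewrite inE => /andP[Gx sx].
  have [lam ->] := minimal_central_eigen Gx (quot_scalar_commuting Gx sx).
  by have [mu ->] := is_scalar_mxP sx; exists (lam, mu).
have [lm lm_spec] := fin_all_exists lm_ex.
have lam_mu : {in N, forall x, V *m rho x = (lm x).1 *: V /\ quot_rep x = (lm x).2%:M}.
  by move=> x; apply: lm_spec.
exact: field_mul_group_cyclic (quot_ratio_morph lam_mu) (quot_ratio_eq1 lam_mu).
Qed.

Lemma quot_rep_commuting : commuting G rho -> commuting G quot_rep.
Proof. by move=> commG g h Gg Gh; rewrite /quot_rep -!factmxM ?V_mod // commG. Qed.

Lemma rank1_commuting : \rank V = 1%N -> commuting G rho.
Proof.
move=> rV1; set w := nz_row V; have w0 : w != 0 by rewrite nz_row_eq0.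
have /andP[_ Vw] : (w == V)%MS.
  by rewrite -(mxrank_leqif_eq (nz_row_sub V)).2 rank_rV w0 rV1.
have scale_w u : u \in G -> exists2 k, k != 0 & w *m rho u = k *: w.
  move=> Gu; have /sub_rVP[k ek] : (w *m rho u <= w)%MS.
    exact: submx_trans (submx_trans (submxMr _ (nz_row_sub V)) (V_mod Gu)) Vw.
  exists k => //; apply: contraNneq w0 => k0.
  by rewrite -[w](mulmxK (projective_unit rhoP Gu)) ek k0 scale0r mul0mx.
have [c rho_comm] := comm_factor_exists rhoP cGG.
move=> g h Gg Gh; have [kg kg0 ekg] := scale_w g Gg; have [kh kh0 ekh] := scale_w h Gh.
suff c1 : c g h = 1 by rewrite rho_comm // c1 scale1r.
have : w *m (rho g *m rho h) = w *m (c g h *: (rho h *m rho g)) by rewrite rho_comm.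
rewrite -scalemxAr !mulmxA ekg ekh -!scalemxAl ekh ekg !scalerA.
rewrite -[LHS]scale1r scalerA -mulrA [kh * kg]mulrC => /(scalev_inj w0) e.
by apply: (mulIf (mulf_neq0 kg0 kh0)); rewrite -e.
Qed.

Hypothesis IH_quot : forall (hT : finGroupType) (H : {group hT}) (sigma : hT -> 'M[CC]_e),
  projective H sigma -> abelian H -> proj_faithful H sigma -> rank_lt_or_exceptional H sigma.

Lemma reducible_rank_lt : ('r(G)%g < m)%N.
Proof.
have rGQ : ('r(G)%g <= 'r(G / N)%g + 1)%N.
  exact: rank_quotient_cyclic (proj_ker_norm quot_rep_projective cGG) quot_ker_cyclic.
have := quot_degree_lt; rewrite mxrank_coker => e_lt.
have [rQ_lt | [_ rQ_le ncommQ]] := IH_quot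
  (proj_quo_rep_projective quot_rep_projective quot_degree_gt0 cGG)
  (quotient_abelian N cGG) (@proj_quo_rep_faithful _ _ _ _ _).
  have rQ_lt' : ('r(G / N)%g < m - \rank V)%N by rewrite -mxrank_coker.
  lia.
have rQ_le' : ('r(G / N)%g <= m - \rank V)%N by rewrite -mxrank_coker.
suff : (1 < \rank V)%N by lia.
rewrite ltn_neqAle rank_V_gt0 andbT eq_sym; apply: contra_notN ncommQ => /eqP/rank1_commuting.
by move/quot_rep_commuting/proj_quo_rep_commuting.
Qed.

End Reducible.

Lemma exists_minimal_proj_mxmodule (gT : finGroupType) (G : {group gT}) m
    (rho : gT -> 'M[CC]_m) (U : 'M[CC]_m) :
  proj_mxmodule G rho U -> U != 0 -> ~~ row_full U ->
  exists V : 'M[CC]_m, [/\ proj_mxmodule G rho V, V != 0, (\rank V < m)%N &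
    forall W, proj_mxmodule G rho W -> W != 0 -> (W <= V)%MS -> (V <= W)%MS].
Proof.
elim: {U}(\rank U).+1 {-2}U (ltnSn (\rank U)) => // k IHk U rUk U_mod U0 U_nfull.
have [[W [W_mod W0 sWU nsUW]] | no_sub] := classic (exists W : 'M[CC]_m,
    [/\ proj_mxmodule G rho W, W != 0, (W <= U)%MS & ~~ (U <= W)%MS]).
  apply: (IHk W) => //; last by apply: contra nsUW => /submx_full.
  have : (W < U)%MS by rewrite ltmxE sWU.
  by rewrite ltmxErank => /andP[_]; lia.
exists U; split=> //; first by rewrite ltn_neqAle rank_leq_col andbT.
by move=> W W_mod W0 sWU; apply/negPn/negP => nsUW; apply: no_sub; exists W.
Qed.

Lemma faithful_proj_rank_bound m (gT : finGroupType) (G : {group gT}) (rho : gT -> 'M[CC]_m) :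
  projective G rho -> (0 < m)%N -> abelian G -> proj_faithful G rho ->
  rank_lt_or_exceptional G rho.
Proof.
elim/ltn_ind: m gT G rho => m IHm gT G rho rhoP m_gt0 cGG rho_faithful.
have [[U [U_mod U0 U_nfull]] | rho_irr] := classic (exists U : 'M[CC]_m,
    [/\ proj_mxmodule G rho U, U != 0 & ~~ row_full U]); last first.
  apply: proj_irr_rank_bound => // U U_mod U0; apply/negPn/negP => U_nfull.
  by apply: rho_irr; exists U.
have [V [V_mod V0 V_lt V_min]] := exists_minimal_proj_mxmodule U_mod U0 U_nfull.
left; apply: (reducible_rank_lt rhoP cGG rho_faithful V_mod V0 V_lt V_min) => hT H sigma sigmaP.
exact: IHm (quot_degree_lt V0 V_lt) hT H sigma sigmaP (quot_degree_gt0 V_lt).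
Qed.

(** * A faithful diagonal representation *)

Lemma exists_prim_root (F : closedFieldType) n :
  n%:R != 0 :> F -> exists z : F, n.-primitive_root z.
Proof.
move=> n0; have n_gt0 : (0 < n)%N by rewrite lt0n; apply: contraNneq n0 => ->.
pose p : {poly F} := 'X^n - 1; have [r Dp] := closed_field_poly_normal p.
rewrite (monicP _) ?monicXnsubC // scale1r in Dp.
have rn1 : all n.-unity_root r by apply/allP=> z; rewrite -root_prod_XsubC -Dp.
have sz_r : (n < (size r).+1)%N by rewrite -(size_prod_XsubC r id) -Dp size_XnsubC.
have [|z] := hasP (has_prim_root n_gt0 rn1 _ sz_r); last by exists z.
by rewrite -separable_prod_XsubC -Dp separable_Xn_sub_1.
Qed.

Section CyclicChar.
Variables (gT : finGroupType) (F : fieldType) (x : gT) (z : F).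
Hypothesis z_prim : #[x]%g.-primitive_root z.

Definition cyclic_char (y : gT) : F :=
  if [pick i : 'I_#[x]%g | (x ^+ i)%g == y] is Some i then z ^+ i else 1.

Lemma cyclic_charX k : cyclic_char (x ^+ k)%g = z ^+ k.
Proof.
rewrite /cyclic_char; case: pickP => [i /eqP xi | none].
  rewrite -(prim_expr_mod z_prim) -[in RHS](prim_expr_mod z_prim); congr (_ ^+ _).
  by apply/eqP; rewrite -eq_expg_mod_order xi.
have lt_k : (k %% #[x]%g < #[x]%g)%N by rewrite ltn_mod order_gt0.
by have := none (Ordinal lt_k); rewrite /= expg_mod_order eqxx.
Qed.

Lemma cyclic_charM : {in <[x]>%g &, {morph cyclic_char : u v / (u * v)%g >-> u * v}}.
Proof. by move=> _ _ /cycleP[a ->] /cycleP[b ->]; rewrite -expgD !cyclic_charX exprD. Qed.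

Lemma cyclic_char_neq0 u : u \in <[x]>%g -> cyclic_char u != 0.
Proof.
case/cycleP=> a ->; rewrite cyclic_charX expf_neq0 //; apply/eqP => z0.
have /eqP := prim_expr_order z_prim.
by rewrite z0 expr0n eqn0Ngt order_gt0 eq_sym oner_eq0.
Qed.

Lemma cyclic_char_eq1 u : u \in <[x]>%g -> cyclic_char u = 1 -> u = 1%g.
Proof.
case/cycleP=> a ->; rewrite cyclic_charX => /eqP.
by rewrite -(prim_order_dvd z_prim) order_dvdn => /eqP.
Qed.

End CyclicChar.

Definition separating_chars (gT : finGroupType) (A : {set gT}) k (chi : gT -> 'rV[CC]_k) :=
  [/\ {in A &, forall g h, chi (g * h)%g = \row_i (chi g 0 i * chi h 0 i)},
      {in A, forall g i, chi g 0 i != 0} &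
      {in A, forall g, chi g = const_mx 1 -> g = 1%g}].

Lemma exists_separating_chars (gT : finGroupType) (b : seq gT) (G : {group gT}) :
  (\big[dprod/1]_(x <- b) <[x]>)%g = G -> exists chi, @separating_chars _ G (size b) chi.
Proof.
elim: b G => [|x b IH] G; rewrite ?big_nil ?big_cons => defG.
  exists (fun _ => 0); split=> [g h _ _|g _ []//|g]; first by apply/rowP => -[].
  by rewrite -defG inE => /eqP.
have [[_ H _ defH] mulxH cxH tixH] := dprodP defG; rewrite defH in mulxH cxH tixH.
have [chi [chiM chi0 chi1]] := IH H defH.
have [z z_prim] : exists z : CC, #[x]%g.-primitive_root z.
  by apply: exists_prim_root; rewrite natrCC_eq0 -lt0n order_gt0.
have Gdiv g : g \in G -> divgr <[x]> H g \in <[x]>%g by move=> Gg; rewrite mem_divgr ?mulxH.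
have Grem g : g \in G -> remgr <[x]> H g \in H by move=> Gg; rewrite mem_remgr ?mulxH.
have cplH : H \in [complements to <[x]> in G]%g by apply/complP.
have [nxG _] := dprod_normal2 defG.
have [divM remM] := (divgrM cplH cxH, remgrM cplH nxG).
pose psi g := cyclic_char x z (divgr <[x]> H g).
exists (fun g => row_mx (psi g)%:M (chi (remgr <[x]> H g))); split.
- move=> g h Gg Gh; rewrite /psi divM ?remM //.
  rewrite (cyclic_charM z_prim) ?Gdiv // chiM ?Grem //.
  by apply/rowP => j; rewrite !mxE; case: splitP => j' _; rewrite !mxE ?[j']ord1.
- move=> g Gg j; rewrite !mxE; case: splitP => j' _; rewrite ?mxE ?chi0 ?Grem //.
  by rewrite [j']ord1 eqxx mulr1n cyclic_char_neq0 ?Gdiv.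
move=> g Gg; rewrite -[const_mx 1](row_mx_const _ 1 (size b)).
move=> e; have [/rowP/(_ 0) psi1 /chi1 r1] := eq_row_mx (n1 := 1) (n2 := size b) e.
rewrite (divgr_eq <[x]>%g H g) r1 ?Grem // mulg1.
by apply: (cyclic_char_eq1 z_prim (Gdiv g Gg)); move: psi1; rewrite !mxE.
Qed.

Section DiagCharRep.
Variables (gT : finGroupType) (G : {group gT}) (k : nat) (chi : gT -> 'rV[CC]_k).
Hypothesis chiP : separating_chars G chi.

Definition diag_char_rep g : 'M[CC]_(1 + k) := diag_mx (row_mx (const_mx 1) (chi g)).

Lemma diag_char_rep_proj : proj_rep G diag_char_rep.
Proof.
have [chiM chi0 chi1] := chiP.
have chi_1 : chi 1%g = const_mx 1.
  apply/rowP => i; apply: (mulfI (chi0 _ (group1 G) i)); rewrite mxE mulr1.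
  by have /rowP/(_ i) := chiM _ _ (group1 G) (group1 G); rewrite mulg1 mxE => <-.
have entry_neq0 g (j : 'I_(1 + k)) : g \in G -> row_mx (const_mx 1) (chi g) 0 j != 0.
  by move=> Gg; rewrite mxE; case: splitP => j' _; rewrite ?mxE ?oner_neq0 ?chi0.
exists (fun _ _ => 1); split=> [|g Gg|g h _ _|g h Gg Gh]; rewrite ?oner_neq0 //.
- by rewrite /diag_char_rep chi_1 row_mx_const diag_const_mx.
- rewrite unitmxE det_diag unitfE; apply/prodf_neq0 => j _; exact: entry_neq0.
rewrite scale1r /diag_char_rep mulmx_diag chiM //; congr diag_mx.
by apply/rowP => j; rewrite !mxE; case: splitP => j' _; rewrite !mxE ?mulr1.
Qed.

Lemma diag_char_rep_faithful : proj_faithful G diag_char_rep.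
Proof.
have [_ _ chi1] := chiP; move=> g Gg /is_scalar_mxP[a ea].
have entry (j : 'I_(1 + k)) : row_mx (const_mx 1) (chi g) 0 j = a.
  by have := congr1 (fun A : 'M_(1 + k) => A j j) ea; rewrite !mxE eqxx !mulr1n.
apply: chi1 => //; apply/rowP => j; rewrite mxE -(row_mxEr (const_mx 1 : 'rV_1)) entry.
by rewrite -(entry (lshift k 0)) row_mxEl mxE.
Qed.

End DiagCharRep.

Lemma proj_faithful_degree0 (gT : finGroupType) (G : {group gT}) (rho : gT -> 'M[CC]_0) :
  proj_faithful G rho -> G :=: 1%g.
Proof.
move=> rho_faithful; apply/trivgP/subsetP => g Gg; rewrite inE; apply/eqP/rho_faithful => //.
by apply/is_scalar_mxP; exists 0; rewrite [LHS]flatmx0 [RHS]flatmx0.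
Qed.

Lemma has_faithful_proj_rep_rank_succ (gT : finGroupType) (G : {group gT}) :
  abelian G -> has_faithful_proj_rep G ('r(G)%g).+1.
Proof.
move=> cGG; have [b defG tG] := abelian_structure cGG.
have [chi chiP] := exists_separating_chars defG.
have <- : size b = 'r(G)%g by rewrite -(size_abelian_type cGG) -tG size_map.
by exists (diag_char_rep chi); split; [apply: diag_char_rep_proj | apply: diag_char_rep_faithful].
Qed.

Lemma rank_lt_faithful_proj_degree (gT : finGroupType) (G : {group gT}) m :
  abelian G -> ~ elementary_abelian G -> has_faithful_proj_rep G m -> ('r(G)%g < m)%N.
Proof.
move=> cGG nabelem [rho [rhoP rho_faithful]]; case: m rho rhoP rho_faithful => [|m] rho rhoP.
  by move/proj_faithful_degree0 => G1; case: nabelem; exists 2%N; rewrite G1 abelem1.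
move/(faithful_proj_rank_bound (proj_rep_projective rhoP) (ltn0Sn m) cGG).
by case=> // -[/nabelem].
Qed.

Theorem theorem4p10 (gT : finGroupType) (G : {group gT}) (n : nat) :
  abelian G -> ('m(G))%g = n -> ~ elementary_abelian G -> is_tau G n.+1.
Proof.
move=> cGG mG nabelem; have <- : 'r(G)%g = n by rewrite -grank_abelian.
split; first exact: has_faithful_proj_rep_rank_succ.
by move=> m; apply: rank_lt_faithful_proj_degree.
Qed.
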